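(* Let $n$ and $k$ be integers with $3\le k<n/2$ and $(n,k)\notin\{(8,3),(10,3),(12,5),(13,5),(24,5),(26,5)\}$. Then $A(n,k)=B(n,k)$.
   Context: $\mathrm{DGP}(n,k)$ ($1\le k<n/2$) is the graph with vertex set $\{(u_i,j),(v_i,j): 0\le i\le n-1,\ j\in\{0,1\}\}$ and edges $\{(u_i,j),(u_{i+1},1-j)\}$, $\{(u_i,j),(v_i,1-j)\}$ (spokes, forming the set $\mathcal{S}$), $\{(v_i,j),(v_{i+k},1-j)\}$, subscripts mod $n$ (the canonical double cover of the generalized Petersen graph $\mathrm{GP}(n,k)$). $A(n,k)=\mathrm{Aut}(\mathrm{DGP}(n,k))$ and $B(n,k)$ is the setwise stabilizer of $\mathcal{S}$ in $A(n,k)$. *)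

From mathcomp Require Import all_boot all_fingroup.
Set Implicit Arguments. Unset Strict Implicit. Unset Printing Implicit Defensive.

(* Vertices of DGP(n,k): (side, i, j) where side = false for u_i, true for v_i,
   i : 'I_n, and j : bool is the layer index in {0,1}. *)
Definition dgp_vertex (n : nat) := (bool * 'I_n * bool)%type.

Definition mkV n (s : bool) (i : 'I_n) (j : bool) : dgp_vertex n := (s, i, j).

Definition dgp_outer n (x y : dgp_vertex n) : bool :=
  let: (s, i, j) := x in let: (s', i', j') := y in
  [&& ~~ s, ~~ s', val i' == (val i + 1) %% n & j' == ~~ j].

Definition dgp_spoke n (x y : dgp_vertex n) : bool :=
  let: (s, i, j) := x in let: (s', i', j') := y in
  [&& ~~ s, s', i' == i & j' == ~~ j].

Definition dgp_inner n k (x y : dgp_vertex n) : bool :=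
  let: (s, i, j) := x in let: (s', i', j') := y in
  [&& s, s', val i' == (val i + k) %% n & j' == ~~ j].

Definition dgp_adj n k (x y : dgp_vertex n) : bool :=
  [|| dgp_outer x y, dgp_outer y x, dgp_spoke x y, dgp_spoke y x,
      dgp_inner k x y | dgp_inner k y x].

Definition dgp_edges n k : {set {set dgp_vertex n}} :=
  [set [set x; y] | x in [set: dgp_vertex n], y in [set y | dgp_adj k x y]].

Definition dgp_spokes n : {set {set dgp_vertex n}} :=
  [set [set mkV false i j; mkV true i (~~ j)] | i : 'I_n, j : bool].

Definition A_aut n k : {set {perm dgp_vertex n}} :=
  [set g : {perm dgp_vertex n} |
     [forall x, forall y, dgp_adj k (g x) (g y) == dgp_adj k x y]].

Definition B_stab n k : {set {perm dgp_vertex n}} :=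
  [set g in A_aut n k |
     [set (fun E : {set dgp_vertex n} => [set g x | x in E]) e | e in dgp_spokes n]
       == dgp_spokes n].

(* An automorphism of DGP(n, k) preserves, for every m, the number of m-cycles
   through each edge, so it maps spokes to spokes as soon as these counts tell
   spokes from rim edges.  The counts are local: DGP(n, k) is the quotient of
   the covering graph on {u, v} x Z^2 x {0, 1} (outer edges move the first
   coordinate, inner edges the second, spokes switch the side) by the lattice
   L(n, k) = {(a, b) | n divides a + b k}, and cycles of length m only see the
   vectors of L(n, k) of l1-norm at most m.  For n <= 100 the counts are
   computed outright.  For n > 100 any two vectors of L(n, k) of norm at most
   10 have a determinant divisible by n but at most 100 in absolute value, so
   these short vectors are the multiples of one shortest vector v; the cycle
   counts up to length 10 then depend only on v, which ranges over a finite
   set of candidates, each of which is checked. *)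

From HB Require Import structures.
From mathcomp Require Import all_boot all_fingroup zify.
From Stdlib Require Import ZArith Lia.
Set Implicit Arguments. Unset Strict Implicit. Unset Printing Implicit Defensive.

(** * Counting cycles through an edge *)

Section PathCount.
Variables (V : finType) (adj : rel V).

(* [npaths x (m - 2) [:: x] y] is the number of m-cycles through the edge xy,
   traversed from x to y. *)
Fixpoint npaths (x0 : V) (L : nat) (vis : seq V) (y : V) : nat :=
  if L is L'.+1 then
    \sum_(z | adj y z && (z \notin y :: vis)) npaths x0 L' (y :: vis) z
  else adj y x0.

Lemma npaths_perm (g : {perm V}) :
  (forall x y, adj (g x) (g y) = adj x y) ->
  forall L x0 vis y, npaths (g x0) L (map g vis) (g y) = npaths x0 L vis y.
Proof.
move=> g_adj; elim=> [|L IH] x0 vis y /=; first by rewrite g_adj.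
rewrite (reindex_inj (@perm_inj _ g)) /=; apply: eq_big => [z|z _].
  by rewrite g_adj -map_cons mem_map //; apply: perm_inj.
by rewrite -map_cons IH.
Qed.

Definition edge_signature (ms : seq nat) (x y : V) : seq nat :=
  [seq npaths x (m - 2) [:: x] y | m <- ms].

Lemma edge_signature_perm (g : {perm V}) ms x y :
  (forall x y, adj (g x) (g y) = adj x y) ->
  edge_signature ms (g x) (g y) = edge_signature ms x y.
Proof. by move=> g_adj; apply: eq_map => m; apply: (npaths_perm g_adj _ _ [:: x]). Qed.

End PathCount.

Section CoverCount.
Variables (W : Type) (weq : W -> W -> bool) (nb : W -> seq W).

Fixpoint cnpaths (x0 : W) (L : nat) (vis : seq W) (y : W) : nat :=
  if L is L'.+1 then
    sumn [seq if has (weq z) (y :: vis) then 0 else cnpaths x0 L' (y :: vis) z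
         | z <- nb y]
  else has (weq x0) (nb y).

Variables (V : finType) (adj : rel V) (f : W -> V).
Hypothesis f_eq : forall w w', (f w == f w') = weq w w'.
Hypothesis adj_f : forall w y, adj (f w) y = (y \in map f (nb w)).
Hypothesis uniq_f : forall w, uniq (map f (nb w)).

Lemma mem_map_cover w s : (f w \in map f s) = has (weq w) s.
Proof. by elim: s => //= z s IH; rewrite in_cons f_eq IH. Qed.

Lemma npaths_cover L x0 vis y :
  npaths adj (f x0) L (map f vis) (f y) = cnpaths x0 L vis y.
Proof.
elim: L vis y => [|L IH] vis y /=; first by rewrite adj_f mem_map_cover.
rewrite (eq_bigl (fun z => (z \in map f (nb y)) && (z \notin map f (y :: vis))));
  last by move=> z; rewrite adj_f.
rewrite big_mkcondr -big_uniq //= big_map.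
elim: (nb y) => [|z s IHs]; first by rewrite big_nil.
by rewrite big_cons IHs -map_cons mem_map_cover IH /=; case: (_ || _).
Qed.

End CoverCount.

(** * The covering graph over Z^2 *)

HB.instance Definition _ := hasDecEq.Build Z Z.eqb_spec.

(* (s, a, b, p) lies over the vertex of side s (u if false, v if true), index
   i0 + a + b k and layer j0 + p, for a base point (i0, j0) chosen by [emb]. *)
Definition cvertex := (bool * Z * Z * bool)%type.

Definition cnb (w : cvertex) : seq cvertex :=
  let: (s, a, b, p) := w in
  if s then [:: (true, a, (b + 1)%Z, ~~ p); (true, a, (b - 1)%Z, ~~ p); (false, a, b, ~~ p)]
  else [:: (false, (a + 1)%Z, b, ~~ p); (false, (a - 1)%Z, b, ~~ p); (true, a, b, ~~ p)].

(* Two cover vertices lie over the same vertex iff they have the same side and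
   parity and their difference (a, b) satisfies P; P is [lat n k] for
   DGP(n, k), and any predicate agreeing with it near the origin yields the
   same short cycle counts. *)
Definition cweq (P : Z -> Z -> bool) (w w' : cvertex) : bool :=
  let: (s, a, b, p) := w in let: (s', a', b', p') := w' in
  if (s == s') && (p == p') then P (a - a')%Z (b - b')%Z else false.

Definition lat (N K a b : Z) : bool := ((a + b * K) mod N =? 0)%Z.

Definition norm1 (v : Z * Z) : nat := Z.abs_nat v.1 + Z.abs_nat v.2.

Definition cdist (w w' : cvertex) : nat :=
  let: (_, a, b, _) := w in let: (_, a', b', _) := w' in norm1 (a - a', b - b')%Z.

Lemma cdist_sym w w' : cdist w w' = cdist w' w.
Proof. by case: w w' => [[[? a] b] ?] [[[? a'] b'] ?] /=; rewrite /norm1 /=; lia. Qed.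

Lemma cdist_triangle w1 w2 w3 : cdist w1 w3 <= cdist w1 w2 + cdist w2 w3.
Proof.
by case: w1 w2 w3 => [[[? ?] ?] ?] [[[? ?] ?] ?] [[[? ?] ?] ?] /=; rewrite /norm1 /=; lia.
Qed.

Lemma cdist_cnb w z : z \in cnb w -> cdist w z <= 1.
Proof.
by case: w => [[[[] a] b] p]; rewrite !inE => /or3P [] /eqP -> /=; rewrite /norm1 /=; lia.
Qed.

Lemma cdist_nth_cnb w d : cdist (nth w (cnb w) d) w <= 1.
Proof.
case: (ltnP d (size (cnb w))) => [/(mem_nth w)/cdist_cnb|/(nth_default w) ->].
  by rewrite cdist_sym.
by case: w => [[[? ?] ?] ?] /=; rewrite /norm1 /=; lia.
Qed.

Definition agree (P P' : Z -> Z -> bool) (R : nat) :=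
  forall a b, norm1 (a, b) <= R -> P a b = P' a b.

Section Agree.
Variables (P P' : Z -> Z -> bool) (R : nat).
Hypothesis PP' : agree P P' R.

Lemma cweq_agree w w' : cdist w w' <= R -> cweq P w w' = cweq P' w w'.
Proof. by case: w w' => [[[s a] b] p] [[[s' a'] b'] p'] /= /PP' ->. Qed.

Lemma cnpaths_agree L x0 (vis : seq cvertex) y :
  cdist y x0 <= size vis -> {in vis, forall z, cdist y z <= size vis} ->
  size vis + L + 1 <= R ->
  cnpaths (cweq P) cnb x0 L vis y = cnpaths (cweq P') cnb x0 L vis y.
Proof.
elim: L vis y => [|L IH] vis y yx0 yvis sizeR /=.
  congr (nat_of_bool _); apply: eq_in_has => z /cdist_cnb yz; apply: cweq_agree.
  by have := cdist_triangle x0 y z; rewrite (cdist_sym x0 y); lia.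
congr sumn; apply/eq_in_map => z /cdist_cnb yz; rewrite cdist_sym in yz.
have zvis : {in y :: vis, forall w, cdist z w <= size (y :: vis)}.
  move=> w; rewrite inE => /predU1P [->|/yvis yw] /=; first lia.
  by have := cdist_triangle z y w; lia.
have Pz : {in y :: vis, cweq P z =1 cweq P' z}.
  by move=> w wvis; apply: cweq_agree; have := zvis w wvis; rewrite /=; lia.
rewrite Pz ?mem_head // (eq_in_has (a2 := cweq P' z)) => [|w wvis]; last first.
  by apply: Pz; rewrite inE wvis orbT.
case: (_ || _) => //; apply: IH => //=; last lia.
by have := cdist_triangle z y x0; lia.
Qed.

End Agree.

Definition base (s : bool) : cvertex := (s, 0%Z, 0%Z, false).

(* Edges 0 and 1 at a vertex are rim edges, edge 2 is its spoke. *)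
Definition cover_signature P ms s d : seq nat :=
  [seq cnpaths (cweq P) cnb (base s) (m - 2) [:: base s] (nth (base s) (cnb (base s)) d)
  | m <- ms].

Lemma cover_signature_agree P P' R ms s d : agree P P' R ->
  {in ms, forall m, 2 <= m <= R} ->
  cover_signature P ms s d = cover_signature P' ms s d.
Proof.
move=> PP' msR; apply/eq_in_map => m /msR mR.
apply: (cnpaths_agree PP'); last by rewrite /=; lia.
  exact: cdist_nth_cnb.
by move=> z; rewrite inE => /eqP ->; apply: cdist_nth_cnb.
Qed.

Definition spokes_separated P ms : bool :=
  let rims := [:: cover_signature P ms false 0; cover_signature P ms false 1;
                  cover_signature P ms true 0; cover_signature P ms true 1] in
  (cover_signature P ms false 2 \notin rims) && (cover_signature P ms true 2 \notin rims).

Lemma spokes_separatedP P ms : spokes_separated P ms ->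
  forall s s' d, d < 2 -> cover_signature P ms s 2 != cover_signature P ms s' d.
Proof.
case/andP; rewrite !inE !negb_or => /and4P [? ? ? ?] /and4P [? ? ? ?].
by case=> [] [] [|[|]].
Qed.

Lemma spokes_separated_agree P P' R ms : agree P P' R ->
  {in ms, forall m, 2 <= m <= R} ->
  spokes_separated P ms = spokes_separated P' ms.
Proof.
by move=> PP' msR; rewrite /spokes_separated !(cover_signature_agree _ _ PP' msR).
Qed.

(** * DGP(n, k) as a quotient of the cover *)

Section DGPCover.
Variables n k : nat.
Local Notation N := n.+1.
Local Notation NZ := (Z.of_nat n.+1).
Local Notation KZ := (Z.of_nat k).
Hypothesis k_gt0 : 0 < k.
Hypothesis k2_lt : 2 * k < N.

Definition idx (X : Z) : 'I_N := inord (Z.to_nat (X mod NZ)).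

Lemma modnZ (m : nat) : Z.of_nat (m %% N) = (Z.of_nat m mod NZ)%Z.
Proof.
apply: (@Z.mod_unique_pos _ _ (Z.of_nat (m %/ N))); last first.
  by rewrite {1}(divn_eq m N); lia.
have := ltn_pmod m (ltn0Sn n); lia.
Qed.

Lemma idxZ X : Z.of_nat (idx X) = (X mod NZ)%Z.
Proof.
have [X_ge0 X_lt] : (0 <= X mod NZ < NZ)%Z by apply: Z.mod_pos_bound; lia.
by rewrite inordK; lia.
Qed.

Lemma idx_nat (i : 'I_N) : idx (Z.of_nat i) = i.
Proof. by apply/val_inj/Nat2Z.inj; rewrite idxZ -modnZ modn_small. Qed.

Lemma idx_eq X Y : (idx X == idx Y) = ((X - Y) mod NZ =? 0)%Z.
Proof.
rewrite -val_eqE; apply/eqP/Z.eqb_spec => [/(f_equal Z.of_nat)|].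
  by rewrite !idxZ => /Z.cong_iff_0.
by move/Z.cong_iff_0; rewrite -!idxZ => /Nat2Z.inj.
Qed.

Lemma idx_addn X (d : nat) : (idx X + d) %% N = idx (X + Z.of_nat d).
Proof. by apply: Nat2Z.inj; rewrite modnZ !idxZ Nat2Z.inj_add idxZ Zplus_mod_idemp_l. Qed.

Lemma idx_eq_sym X Y d : (idx X == idx (Y + d)) = (idx Y == idx (X - d)).
Proof. by rewrite [RHS]eq_sym !idx_eq; congr (Z.eqb (Z.modulo _ _) 0); ring. Qed.

Definition dgp_nbl (s : bool) (X : Z) (j : bool) : seq (dgp_vertex N) :=
  let d := if s then KZ else 1%Z in
  [:: (s, idx (X + d), ~~ j); (s, idx (X - d), ~~ j); (~~ s, idx X, ~~ j)].

Lemma dgp_adjE s X j y : dgp_adj k (s, idx X, j) y = (y \in dgp_nbl s X j).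
Proof.
case: y => [[s' i'] j']; rewrite -(idx_nat i'); set Y := Z.of_nat i'.
rewrite /dgp_adj /dgp_outer /dgp_spoke /dgp_inner /= !inE !xpair_eqE /=.
rewrite !idx_addn !val_eqE !(idx_eq_sym X Y) (eq_sym (idx X)).
by case: s; case: s'; case: j; case: j'; rewrite /= ?andbF ?orbF.
Qed.

Lemma uniq_dgp_nbl s X j : uniq (dgp_nbl s X j).
Proof.
rewrite /= !inE !xpair_eqE !eqxx (_ : (s == ~~ s) = false) ?andbF ?orbF ?andbT;
  last by case: s.
rewrite idx_eq (_ : (X + _ - (X - _) = 2 * if s then KZ else 1)%Z); last by ring.
by rewrite Z.mod_small; case: s; lia.
Qed.

Definition emb (i0 : nat) (j0 : bool) (w : cvertex) : dgp_vertex N :=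
  let: (s, a, b, p) := w in (s, idx (Z.of_nat i0 + a + b * KZ), addb j0 p).

Lemma emb_eq i0 j0 w w' : (emb i0 j0 w == emb i0 j0 w') = cweq (lat NZ KZ) w w'.
Proof.
case: w w' => [[[s a] b] p] [[[s' a'] b'] p'] /=.
rewrite !xpair_eqE idx_eq /lat (can_eq (addKb j0)).
rewrite (_ : (_ + a + b * KZ - (_ + a' + b' * KZ) = a - a' + (b - b') * KZ)%Z); last by ring.
by case: (s == s'); case: (p == p'); rewrite ?andbF ?andbT.
Qed.

Lemma map_emb_cnb i0 j0 s a b p :
  map (emb i0 j0) (cnb (s, a, b, p)) = dgp_nbl s (Z.of_nat i0 + a + b * KZ) (addb j0 p).
Proof.
by case: s; rewrite /= addbN; congr [:: (_, idx _, _); (_, idx _, _); (_, idx _, _)]; ring.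
Qed.

Lemma adj_emb i0 j0 w y : dgp_adj k (emb i0 j0 w) y = (y \in map (emb i0 j0) (cnb w)).
Proof. by case: w => [[[s a] b] p]; rewrite map_emb_cnb dgp_adjE. Qed.

Lemma uniq_emb_cnb i0 j0 w : uniq (map (emb i0 j0) (cnb w)).
Proof. by case: w => [[[s a] b] p]; rewrite map_emb_cnb uniq_dgp_nbl. Qed.

Lemma emb_base (i : 'I_N) j s : emb i j (base s) = (s, i, j).
Proof. by rewrite /emb /base Z.add_0_r Z.mul_0_l Z.add_0_r idx_nat addbF. Qed.

Definition nbl (x : dgp_vertex N) : seq (dgp_vertex N) :=
  let: (s, i, j) := x in dgp_nbl s (Z.of_nat i) j.

Lemma map_emb_base (i : 'I_N) j s : map (emb i j) (cnb (base s)) = nbl (s, i, j).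
Proof. by rewrite map_emb_cnb Z.add_0_r Z.mul_0_l Z.add_0_r addbF. Qed.

Lemma adj_nbl x y : dgp_adj k x y = (y \in nbl x).
Proof. by case: x => [[s i] j]; rewrite -{1}(idx_nat i) dgp_adjE. Qed.

Lemma size_nbl x : size (nbl x) = 3.
Proof. by case: x => [[s i] j]. Qed.

Lemma edge_signature_nbl ms x d : d < 3 ->
  edge_signature (dgp_adj k) ms x (nth x (nbl x) d) = cover_signature (lat NZ KZ) ms x.1.1 d.
Proof.
case: x => [[s i] j] d_lt3.
rewrite -map_emb_base -{1 2}(emb_base i j s) (nth_map (base s)); last by case: s.
apply: eq_map => m.
exact: (npaths_cover (emb_eq i j) (adj_emb i j) (uniq_emb_cnb i j) _ _ [:: base s]).
Qed.

Definition spoke_mate (x : dgp_vertex N) : dgp_vertex N :=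
  let: (s, i, j) := x in (~~ s, i, ~~ j).

Lemma nth_nbl_mate x : nth x (nbl x) 2 = spoke_mate x.
Proof. by case: x => [[s i] j] /=; rewrite idx_nat. Qed.

Lemma aut_adj g : g \in A_aut N k -> forall x y, dgp_adj k (g x) (g y) = dgp_adj k x y.
Proof. by rewrite inE => /forallP g_adj x y; apply/eqP; move/forallP: (g_adj x). Qed.

Lemma aut_spoke_mate g ms : g \in A_aut N k -> spokes_separated (lat NZ KZ) ms ->
  forall x, g (spoke_mate x) = spoke_mate (g x).
Proof.
move=> gA sep x; have g_adj := aut_adj gA.
have gmate : g (spoke_mate x) \in nbl (g x).
  by rewrite -adj_nbl g_adj adj_nbl -nth_nbl_mate mem_nth ?size_nbl.
have [d d_lt3 nth_d] : exists2 d, d < 3 & nth (g x) (nbl (g x)) d = g (spoke_mate x).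
  exists (index (g (spoke_mate x)) (nbl (g x))); last exact: nth_index.
  by rewrite -(size_nbl (g x)) index_mem.
have sig : cover_signature (lat NZ KZ) ms (g x).1.1 d = cover_signature (lat NZ KZ) ms x.1.1 2.
  rewrite -edge_signature_nbl // nth_d edge_signature_perm //.
  by rewrite -nth_nbl_mate edge_signature_nbl.
move: d_lt3 nth_d sig; case: d => [|[|[|//]]] _ nth_d sig.
- by have := spokes_separatedP sep x.1.1 (g x).1.1 (isT : 0 < 2); rewrite sig eqxx.
- by have := spokes_separatedP sep x.1.1 (g x).1.1 (isT : 1 < 2); rewrite sig eqxx.
- by rewrite -(nth_nbl_mate (g x)) nth_d.
Qed.

Lemma spoke_mate_spoke x : [set x; spoke_mate x] \in dgp_spokes N.
Proof.
case: x => [[[] i] j]; last exact: imset2_f.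
by rewrite /= setUC -{2}(negbK j); apply: imset2_f.
Qed.

Lemma aut_stab ms : spokes_separated (lat NZ KZ) ms -> A_aut N k = B_stab N k.
Proof.
move=> sep; apply/setP => g; rewrite [in RHS]inE.
case gA: (g \in A_aut N k) => //=; symmetry.
rewrite eqEcard card_imset ?leqnn ?andbT; last exact: (imset_inj (@perm_inj _ g)).
apply/subsetP => _ /imsetP [_ /imset2P [i j _ _ ->] ->].
rewrite imsetU1 imset_set1 (_ : mkV true i (~~ j) = spoke_mate (mkV false i j)) //.
by rewrite (aut_spoke_mate gA sep) spoke_mate_spoke.
Qed.

End DGPCover.

(** * Short vectors of the lattice *)

Definition origin (a b : Z) : bool := (a =? 0)%Z && (b =? 0)%Z.
Definition nonzero (v : Z * Z) : bool := ~~ origin v.1 v.2.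
Definition det (v w : Z * Z) : Z := (v.1 * w.2 - w.1 * v.2)%Z.
Definition dot (v w : Z * Z) : Z := (v.1 * w.1 + v.2 * w.2)%Z.

(* For v <> 0, (a, b) is an integer multiple of v iff it is collinear with v
   and its coordinate [dot v (a, b) / dot v v] along v is an integer. *)
Definition zline (v : Z * Z) (a b : Z) : bool :=
  (det v (a, b) =? 0)%Z && (dot v (a, b) mod dot v v =? 0)%Z.

Lemma dot_self_gt0 v : nonzero v -> (0 < dot v v)%Z.
Proof.
case: v => a b; rewrite /nonzero /origin /dot /=.
by case: Z.eqb_spec; case: Z.eqb_spec => //=; nia.
Qed.

Lemma collinear_scale v w : det v w = 0%Z ->
  (dot v v * w.1 = dot v w * v.1)%Z /\ (dot v v * w.2 = dot v w * v.2)%Z.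
Proof.
case: v w => a b [c d]; rewrite /det /dot /= => det0; split.
  by rewrite -[LHS]Z.add_0_r -(Z.mul_0_r b) -det0; ring.
by rewrite -[LHS]Z.sub_0_r -(Z.mul_0_r a) -det0; ring.
Qed.

Lemma zlineP v w : nonzero v ->
  reflect (exists t, w = (t * v.1, t * v.2)%Z) (zline v w.1 w.2).
Proof.
case: w => a b v0 /=; have s_gt0 := dot_self_gt0 v0.
apply: (iffP andP) => [[/Z.eqb_eq det0 /Z.eqb_eq]|[t [-> ->]]].
  case/Z.mod_divide => [|t dotE]; first lia.
  have [e1 e2] := collinear_scale det0.
  exists t; congr pair; apply: (Z.mul_reg_l _ _ (dot v v)) => //; try lia.
    by rewrite e1 dotE; ring.
  by rewrite e2 dotE; ring.
split; apply/Z.eqb_eq; first by rewrite /det /=; ring.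
by rewrite (_ : dot v _ = t * dot v v)%Z ?Z_mod_mult // /dot /=; ring.
Qed.

Lemma norm1_lt_scaled u v s r : (0 <= r < s)%Z -> nonzero v ->
  (s * u.1 = r * v.1)%Z -> (s * u.2 = r * v.2)%Z -> norm1 u < norm1 v.
Proof.
case: u v => [a b] [c d]; rewrite /nonzero /origin /norm1 /= => rs.
by case: Z.eqb_spec; case: Z.eqb_spec => //= *; nia.
Qed.

(* One step of Euclid's algorithm along the line spanned by v. *)
Lemma collinear_reduce v w : nonzero v -> det v w = 0%Z ->
  zline v w.1 w.2 \/
  exists t, let u := (w.1 - t * v.1, w.2 - t * v.2)%Z in nonzero u && (norm1 u < norm1 v).
Proof.
case: w => a b /= v0 det0; have s_gt0 := dot_self_gt0 v0.
have [r0|r_ne0] := Z.eq_dec (dot v (a, b) mod dot v v) 0.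
  by left; rewrite /zline det0 r0.
right; exists (dot v (a, b) / dot v v)%Z; set u := (_, _).
have [r_ge0 r_lt] := Z.mod_pos_bound (dot v (a, b)) _ s_gt0.
have dot_u : dot v u = (dot v (a, b) mod dot v v)%Z.
  rewrite Z.mod_eq; last lia.
  by rewrite /u /dot /=; ring.
have [e1 e2] : (dot v v * u.1 = dot v u * v.1)%Z /\ (dot v v * u.2 = dot v u * v.2)%Z.
  by apply: collinear_scale; rewrite -det0 /det /=; ring.
rewrite dot_u in e1 e2; apply/andP; split.
  apply/negP => /andP [/Z.eqb_eq u1 /Z.eqb_eq u2]; apply: r_ne0.
  by rewrite -dot_u /dot u1 u2; ring.
exact: (norm1_lt_scaled (conj r_ge0 r_lt) v0 e1 e2).
Qed.

Lemma abs_det_le v w : Z.abs_nat (det v w) <= norm1 v * norm1 w.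
Proof. by case: v w => [a b] [c d]; rewrite /det /norm1 /=; nia. Qed.

Section Lattice.
Variables N K : Z.
Hypothesis N_neq0 : N <> 0%Z.
Local Notation L := (lat N K).

Lemma latP a b : reflect (N | a + b * K)%Z (L a b).
Proof. by apply: (iffP (Z.eqb_spec _ _)) => /Z.mod_divide; apply. Qed.

Lemma lat_det v w : L v.1 v.2 -> L w.1 w.2 -> (N | det v w)%Z.
Proof.
move=> /latP vL /latP wL.
rewrite (_ : det v w = w.2 * (v.1 + v.2 * K) - v.2 * (w.1 + w.2 * K))%Z.
  by apply: Z.divide_sub_r; apply: Z.divide_mul_r.
by rewrite /det; ring.
Qed.

Lemma lat_sub_mul v w t : L v.1 v.2 -> L w.1 w.2 -> L (w.1 - t * v.1) (w.2 - t * v.2)%Z.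
Proof.
move=> /latP vL /latP wL; apply/latP.
rewrite (_ : (w.1 - t * v.1 + _ * _) = w.1 + w.2 * K - t * (v.1 + v.2 * K))%Z.
  by apply: Z.divide_sub_r => //; apply: Z.divide_mul_r.
by ring.
Qed.

Lemma lat_mul v t : L v.1 v.2 -> L (t * v.1) (t * v.2)%Z.
Proof.
move=> /latP vL; apply/latP.
rewrite (_ : (t * v.1 + _ * _) = t * (v.1 + v.2 * K))%Z; last by ring.
exact: Z.divide_mul_r.
Qed.

End Lattice.

Lemma dvd_small N x : (N | x)%Z -> (Z.abs x < Z.abs N)%Z -> x = 0%Z.
Proof.
move=> /Z.divide_abs_r Nx x_lt; case: (Z.eq_dec x 0) => // x0.
by have := Z.divide_pos_le _ _ (proj2 (Z.abs_pos _) x0) (proj2 (Z.divide_abs_l _ _) Nx); lia.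
Qed.

Definition admissible (v : Z * Z) : bool :=
  ~~ (v.2 =? 0)%Z && (~~ (v.1 =? 0)%Z || (2 <? Z.abs v.2)%Z).

Definition box : seq (Z * Z) :=
  [seq (Z.of_nat i - 10, Z.of_nat j - 10)%Z | i <- iota 0 21, j <- iota 0 21].

Lemma mem_box v : norm1 v <= 10 -> v \in box.
Proof.
case: v => a b; rewrite /norm1 /= => ab; apply/allpairsP.
exists (Z.to_nat (a + 10), Z.to_nat (b + 10)); rewrite !mem_iota /=.
by split; [lia | lia | congr pair; lia].
Qed.

Section ShortVectors.
Variables n k : nat.
Hypotheses (n_gt100 : 100 < n) (k_ge3 : 3 <= k) (k2_lt : 2 * k < n).
Local Notation L := (lat (Z.of_nat n) (Z.of_nat k)).

Let n_neq0 : Z.of_nat n <> 0%Z. Proof. lia. Qed.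

Lemma short_det0 v w : norm1 v <= 10 -> norm1 w <= 10 ->
  L v.1 v.2 -> L w.1 w.2 -> det v w = 0%Z.
Proof.
move=> v10 w10 vL wL; apply: dvd_small (lat_det n_neq0 vL wL) _.
have := abs_det_le v w; nia.
Qed.

Lemma short_admissible v : nonzero v -> norm1 v <= 10 -> L v.1 v.2 -> admissible v.
Proof.
case: v => a b; rewrite /nonzero /origin /admissible /norm1 /= => v0 v10 /(latP _ n_neq0) vL.
have [b0|b_ne0] := Z.eq_dec b 0.
  have a0 : a = 0%Z.
    by apply: (dvd_small (N := Z.of_nat n)); [move: vL; rewrite b0 Z.mul_0_l Z.add_0_r | lia].
  by rewrite a0 b0 in v0.
rewrite (proj2 (Z.eqb_neq b 0) b_ne0) /=.
have [a0|/Z.eqb_neq -> //] := Z.eq_dec a 0; rewrite a0 /=; apply/Z.ltb_lt.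
rewrite a0 Z.add_0_l in vL; case: (Z.lt_ge_cases 2 (Z.abs b)) => // b_le2.
have : (b * Z.of_nat k = 0)%Z by apply: dvd_small vL _; nia.
nia.
Qed.

Lemma short_lattice :
  agree L origin 10 \/ exists2 v, (norm1 v <= 10) && admissible v & agree L (zline v) 10.
Proof.
pose short v := [&& norm1 v <= 10, nonzero v & L v.1 v.2].
have [/hasP [w0 _ short_w0]|no_short] := boolP (has short box); last first.
  left => a b ab; move/hasPn/(_ (a, b) (mem_box ab)): no_short.
  rewrite /short ab /nonzero /origin /lat /=.
  by case: Z.eqb_spec => [->|_]; case: Z.eqb_spec => [->|_] //= /negbTE ->.
right; have ex_short : exists r, has (fun v => (norm1 v == r) && short v) box.
  exists (norm1 w0); apply/hasP; exists w0; rewrite ?eqxx ?short_w0 //.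
  by case/andP: short_w0 => /mem_box.
case: (ex_minnP ex_short) => _ /hasP [v _ /andP [/eqP <- /and3P [v10 v0 vL]]] min_v.
exists v; first by rewrite v10 short_admissible.
move=> a b ab; apply/idP/idP => [wL|]; last first.
  by case/(zlineP (a, b) v0) => t [-> ->]; exact: (lat_mul n_neq0 t vL).
have [//|[t /= /andP [u0 u_lt]]] :=
  collinear_reduce (w := (a, b)) v0 (short_det0 (w := (a, b)) v10 ab vL wL).
have uL : L (a - t * v.1) (b - t * v.2)%Z := lat_sub_mul n_neq0 (w := (a, b)) t vL wL.
have u10 := ltnW (leq_trans u_lt v10).
suff: norm1 v <= norm1 (a - t * v.1, b - t * v.2)%Z by rewrite leqNgt u_lt.
apply: min_v; apply/hasP; exists (a - t * v.1, b - t * v.2)%Z; first exact: mem_box.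
by rewrite eqxx /short u10 u0.
Qed.

End ShortVectors.

(** * The finite verification *)

(* [find] rather than [has], so that evaluation stops at the first list that works. *)
Definition separated_by (mss : seq (seq nat)) P : bool :=
  find (spokes_separated P) mss < size mss.

Lemma separated_byP mss P :
  separated_by mss P -> exists2 ms, ms \in mss & spokes_separated P ms.
Proof. by rewrite /separated_by -has_find => /hasP. Qed.

Definition ms_small : seq (seq nat) := [:: [:: 8]; [:: 10]; [:: 8; 10]; [:: 6; 8; 10; 12]].
Definition ms_large : seq (seq nat) := [:: [:: 8]; [:: 10]].
Definition exceptions : seq (nat * nat) :=
  [:: (8, 3); (10, 3); (12, 5); (13, 5); (24, 5); (26, 5)].

Definition small_check : bool :=
  all (fun n => let N := Z.of_nat n in
    all (fun k => if [&& 3 <= k, 2 * k < n & (n, k) \notin exceptions]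
                  then separated_by ms_small (lat N (Z.of_nat k)) else true)
      (iota 0 n))
    (iota 0 101).

Definition large_check : bool :=
  separated_by ms_large origin &&
  all (fun v => if (norm1 v <= 10) && admissible v
                then separated_by ms_large (zline v) else true) box.

Lemma small_check_ok : small_check.
Proof. by vm_compute. Qed.

Lemma large_check_ok : large_check.
Proof. by vm_compute. Qed.

Lemma small_separated n k : n <= 100 -> 3 <= k -> 2 * k < n -> (n, k) \notin exceptions ->
  exists ms, spokes_separated (lat (Z.of_nat n) (Z.of_nat k)) ms.
Proof.
move=> n_le k_ge k_lt not_exc; have k_lt_n : k < 0 + n by lia.
move/allP/(_ n): small_check_ok; rewrite mem_iota ltnS n_le => /(_ isT) /allP /(_ k).
rewrite mem_iota k_lt_n k_ge k_lt not_exc => /(_ isT) /separated_byP [ms _ sep].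
by exists ms.
Qed.

Lemma separated_by_large_agree P P' : agree P P' 10 -> separated_by ms_large P' ->
  exists ms, spokes_separated P ms.
Proof.
move=> PP' /separated_byP [ms ms_in sep]; exists ms.
rewrite (spokes_separated_agree PP') // => m.
by move: ms_in; rewrite !inE => /orP [] /eqP ->; rewrite inE => /eqP ->.
Qed.

Lemma large_separated n k : 100 < n -> 3 <= k -> 2 * k < n ->
  exists ms, spokes_separated (lat (Z.of_nat n) (Z.of_nat k)) ms.
Proof.
move=> n_gt k_ge k_lt; case/andP: large_check_ok => origin_ok /allP line_ok.
case: (short_lattice n_gt k_ge k_lt) => [LP | [v /andP [v10 v_adm] LP]].
  exact: separated_by_large_agree LP origin_ok.
apply: separated_by_large_agree LP _.
by move: (line_ok v (mem_box v10)); rewrite v10 v_adm.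
Qed.

Theorem lemma5p10 (n k : nat) :
  3 <= k -> 2 * k < n ->
  ~ ((n, k) \in [:: (8, 3); (10, 3); (12, 5); (13, 5); (24, 5); (26, 5)]) ->
  A_aut n k = B_stab n k.
Proof.
move=> k_ge3 k2_lt /negP not_exc.
have [ms sep] : exists ms, spokes_separated (lat (Z.of_nat n) (Z.of_nat k)) ms.
  case: (leqP n 100) => [n_le | n_gt]; first exact: small_separated.
  exact: large_separated.
case: n k2_lt sep {not_exc} => [|n] k2_lt sep; first by rewrite ltn0 in k2_lt.
exact: (aut_stab (leq_trans (isT : 0 < 3) k_ge3) k2_lt sep).
Qed.
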